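(* For every planar rooted tree $t$, the antipode $S$ of $\mathcal{H}$ satisfies $S(t)=-\sum_{c}(-1)^{n_c}W^c(t)$, where the sum runs over all left cuts $c$ of $t$ (including the empty cut).
   Context: Planar rooted trees have their children linearly ordered left to right; a planar forest is a finite, possibly empty, sequence of planar rooted trees; $\mathcal{H}$ is the free associative unital algebra over a field $K$ on planar rooted trees, with basis the planar forests and product concatenation. $B^+(F)$ is the tree obtained by grafting the trees of $F$ on a new common root; $\varepsilon(F)=\delta_{F,1}$. $\Delta$ is the unique linear map with $\Delta(1)=1\otimes1$, $\Delta(xy)=(x\otimes1)\Delta(y)+\Delta(x)(1\otimes y)-x\otimes y$, $\Delta(B^+(x))=B^+(x)\otimes 1+(\mathrm{Id}\otimes B^+)\Delta(x)$; with it $\mathcal{H}$ is a graded infinitesimal bialgebra, and its antipode $S$ is the inverse of $\mathrm{Id}$ for the convolution product $f\star g=m\circ(f\otimes g)\circ\Delta$ on linear endomorphisms (unit $1\varepsilon$). Orders on vertices: $s\geq_{high}s'$ iff $s'=s$ or $s'$ is an ancestor of $s$; for $\geq_{high}$-incomparable $s,s'$ in a forest $t_1\cdots t_n$, $s\geq_{left}s'$ iff $s\in t_i,s'\in t_j$ with $i<j$, or both lie in $t_i$ and $s\geq_{left}s'$ in the forest obtained from $t_i$ by deleting its root (recursively); $s\geq_{h,l}s'$ iff $s\geq_{high}s'$ or $s\geq_{left}s'$ (a total order). For a tree $t$, let $s$ be its greatest vertex for $\geq_{h,l}$ (its leftmost leaf). A left edge is an edge on the path from the root to $s$. A left cut $c$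 is a (possibly empty) set of left edges; cutting them splits $t$ into trees $t_1,\dots,t_n$ indexed so that their roots satisfy $r_1\geq_{h,l}\cdots\geq_{h,l}r_n$ in $t$; $W^c(t)=t_1\cdots t_n$, and $n_c$ is the number of edges in $c$. *)

From HB Require Import structures.
From mathcomp Require Import all_boot all_algebra.
From mathcomp Require Import finmap.
From mathcomp Require Import monalg.

Set Implicit Arguments.
Unset Strict Implicit.
Unset Printing Implicit Defensive.

Import GRing.Theory.
Local Open Scope ring_scope.

Inductive ptree : Type := Node of seq ptree.

Fixpoint ptree_enc (t : ptree) : GenTree.tree unit :=
  let: Node ts := t in GenTree.Node 0 (map ptree_enc ts).

Fixpoint ptree_dec (g : GenTree.tree unit) : ptree :=
  match g with
  | GenTree.Leaf _ => Node [::]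
  | GenTree.Node _ l => Node (map ptree_dec l)
  end.

Fixpoint ptree_encK (t : ptree) : ptree_dec (ptree_enc t) = t :=
  match t return ptree_dec (ptree_enc t) = t with
  | Node ts => f_equal Node
      ((fix aux (l : seq ptree) : map ptree_dec (map ptree_enc l) = l :=
          match l return map ptree_dec (map ptree_enc l) = l with
          | [::] => erefl
          | x :: l' => f_equal2 cons (ptree_encK x) (aux l')
          end) ts)
  end.

HB.instance Definition _ := Countable.copy ptree (can_type ptree_encK).

Definition forest := {fmonom ptree}.

(* H = free associative unital K-algebra on planar trees; its basis is the
   set of planar forests and its product is concatenation. *)
Definition H (K : fieldType) := {malg K[forest]}.

(* Pairs of forests, with the componentwise monoid structure; the algebra
   {malg K[fpair]} is H (x) H with its tensor-product algebra structure. *)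
Definition fpair := (forest * forest)%type.
HB.instance Definition _ := Choice.on fpair.

Definition fpone : fpair := (mone : forest, mone : forest).
Definition fpmul (p q : fpair) : fpair := (mmul p.1 q.1, mmul p.2 q.2).

Lemma fpmulA : associative fpmul.
Proof. by move=> [a b] [c d] [e f]; rewrite /fpmul /= !mulmA. Qed.
Lemma fpmul1m : left_id fpone fpmul.
Proof. by move=> [a b]; rewrite /fpmul /= !mul1m. Qed.
Lemma fpmulm1 : right_id fpone fpmul.
Proof. by move=> [a b]; rewrite /fpmul /= !mulm1. Qed.
Lemma fpmul_eq1 p q : fpmul p q = fpone -> p = fpone /\ q = fpone.
Proof.
case: p q => [a b] [c d]; rewrite /fpmul /fpone /= => -[/unitm[-> ->] /unitm[-> ->]].
by [].
Qed.

HB.instance Definition _ := Choice_isMonomialDef.Build fpair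
  fpmulA fpmul1m fpmulm1 fpmul_eq1.

Definition H2 (K : fieldType) := {malg K[fpair]}.

Section Ops.
Variable K : fieldType.

Definition tens (x y : H K) : H2 K :=
  \sum_(u <- msupp x) \sum_(v <- msupp y) (x@_u * y@_v) *: << (u, v) >>.

Definition Bplus_forest (F : forest) : forest := FMonom [:: Node F].
Definition Bplus (x : H K) : H K :=
  \sum_(u <- msupp x) x@_u *: << Bplus_forest u >>.

Definition IdxBplus (z : H2 K) : H2 K :=
  \sum_(p <- msupp z) z@_p *: tens << p.1 >> (Bplus << p.2 >>).

Definition eps (x : H K) : K := x@_(mone : forest).
Definition unit_eps (x : H K) : H K := eps x *: 1.

Definition conv (Delta : H K -> H2 K) (f g : H K -> H K) (x : H K) : H K :=
  \sum_(p <- msupp (Delta x)) (Delta x)@_p *: (f << p.1 >> * g << p.2 >>).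

Definition is_coproduct (Delta : H K -> H2 K) : Prop :=
  [/\ Delta 1 = tens 1 1,
      forall x y : H K,
        Delta (x * y) = tens x 1 * Delta y + Delta x * tens 1 y - tens x y
    & forall x : H K, Delta (Bplus x) = tens (Bplus x) 1 + IdxBplus (Delta x)].
End Ops.

(* Left cuts.  The left edges of t are the edges on the path from the  *)
(* root to the leftmost leaf; there are [ldepth t] of them, numbered   *)
(* 0, 1, ... starting from the root.                                   *)
Fixpoint ldepth (t : ptree) : nat :=
  let: Node ts := t in
  match ts with
  | t1 :: _ => (ldepth t1).+1
  | [::] => 0
  end.

(* [cutL t bs]: bs.[i] says whether the i-th left edge (from the root)
   is cut.  Returns (component containing the root, list of the other
   components ordered by decreasing root for >=_{h,l}, i.e. deepest
   first). *)
Fixpoint cutL (t : ptree) (bs : seq bool) : ptree * seq ptree :=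
  let: Node ts := t in
  match ts, bs with
  | t1 :: rest, b :: bs' =>
      let: (r, ds) := cutL t1 bs' in
      if b then (Node rest, ds ++ [:: r]) else (Node (r :: rest), ds)
  | _, _ => (Node ts, [::])
  end.

Definition cut_bits (t : ptree) (c : {set 'I_(ldepth t)}) : seq bool :=
  [seq i \in c | i <- enum 'I_(ldepth t)].

(* W^c(t) = t_1 ... t_n with r_1 >=_{h,l} ... >=_{h,l} r_n; the root
   component comes last. *)
Definition Wc (t : ptree) (c : {set 'I_(ldepth t)}) : seq ptree :=
  let: (r, ds) := cutL t (cut_bits c) in ds ++ [:: r].

From HB Require Import structures.
From mathcomp Require Import all_boot all_algebra.
From mathcomp Require Import finmap.
From mathcomp Require Import monalg.

Set Implicit Arguments.
Unset Strict Implicit.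
Unset Printing Implicit Defensive.

Import GRing.Theory.
Local Open Scope ring_scope.

(* For a map X on forests write (S * X)(F) := sum S(F') X(F'') over
   Delta(F) = sum F' (x) F''.  Every term of the reduced coproduct of a
   forest has a nontrivial left factor and a strictly smaller right factor,
   so Id * S = eps forces S to vanish on forests of at least two trees;
   consequently (S * X)(t y) = (S * X(_ y))(t) for a tree t.  Together with
   (S * X)(B+ u) = S(B+ u) X(1) + (S * (X o B+))(u), an induction along the
   leftmost branch gives
     (S * X)(t) = S(t) X(1) + sum_c (-1)^{n_c} t_1 ... t_{n-1} X(t_n),
   where t_n is the component of the root after the left cut c.  Taking
   X = Id and using S * Id = eps yields the formula. *)

Section MonoidAlgebra.
Variables (R : comRingType) (M : monomType).

Lemma mmul_neq1l (x y : M) : x != mone -> mmul x y != mone.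
Proof. by apply: contra => /unitmP[]. Qed.

Lemma malg1U : (1 : {malg R[M]}) = << mone >>.
Proof. by []. Qed.

Lemma malgMUU (p q : M) : (<< p >> : {malg R[M]}) * << q >> = << mmul p q >>.
Proof. by rewrite malgM_def fgmulUU mul1r. Qed.

Lemma malg_scalerAr c (a b : {malg R[M]}) : a * (c *: b) = c *: (a * b).
Proof.
have commC (x : {malg R[M]}) : x * c%:MP = c%:MP * x.
  rewrite (monalgE x) mulr_suml mulr_sumr; apply: eq_bigr => p _.
  by rewrite !malgM_def !fgmulUU mulm1 mul1m mulrC.
by rewrite -!mul_malgC mulrA commC mulrA.
Qed.

End MonoidAlgebra.

Section LinearExtension.
Variables (K : fieldType) (M T : monomType).
Implicit Types (h : M -> {malg K[T]}) (z : {malg K[M]}).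

Definition linext h : {malg K[M]} -> {malg K[T]} := mmap (@mkmalgU T K mone) h.

Lemma linextE h z : linext h z = \sum_(p <- msupp z) z@_p *: h p.
Proof. by rewrite /linext mmapE; apply: eq_bigr => p _; rewrite mul_malgC. Qed.

Lemma linextD h x y : linext h (x + y) = linext h x + linext h y.
Proof. exact: raddfD. Qed.

Lemma linextB h x y : linext h (x - y) = linext h x - linext h y.
Proof. exact: raddfB. Qed.

Lemma linext_sum h (I : Type) (r : seq I) (F : I -> {malg K[M]}) :
  linext h (\sum_(i <- r) F i) = \sum_(i <- r) linext h (F i).
Proof. exact: raddf_sum. Qed.

Lemma linextU h c m : linext h << c *g m >> = c *: h m.
Proof. by rewrite /linext mmapU mul_malgC. Qed.

Lemma linextU1 h m : linext h << m >> = h m.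
Proof. by rewrite linextU scale1r. Qed.

Lemma linextZ h c z : linext h (c *: z) = c *: linext h z.
Proof.
rewrite !linextE msuppZ; have [->|_] := eqP; first by rewrite big_seq_fset0 scale0r.
by rewrite scaler_sumr; apply: eq_bigr => p _; rewrite mcoeffZ scalerA.
Qed.

Lemma eq_linext h1 h2 z : h1 =1 h2 -> linext h1 z = linext h2 z.
Proof. by move=> eq_h; rewrite !linextE; apply: eq_bigr => p _; rewrite eq_h. Qed.

Lemma linextMl h q z : linext h (<< q >> * z) = linext (fun p => h (mmul q p)) z.
Proof.
rewrite {1}(monalgE z) mulr_sumr linext_sum linextE; apply: eq_bigr => p _.
by rewrite malgM_def fgmulUU linextU mul1r.
Qed.

Lemma linextMr h q z : linext h (z * << q >>) = linext (fun p => h (mmul p q)) z.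
Proof.
rewrite {1}(monalgE z) mulr_suml linext_sum linextE; apply: eq_bigr => p _.
by rewrite malgM_def fgmulUU linextU mulr1.
Qed.

Lemma linext_mull a h z : linext (fun p => a * h p) z = a * linext h z.
Proof. by rewrite !linextE mulr_sumr; apply: eq_bigr => p _; rewrite malg_scalerAr. Qed.

End LinearExtension.

Lemma linext_comp (K : fieldType) (M N T : monomType)
    (g : M -> N) (h : N -> {malg K[T]}) (z : {malg K[M]}) :
  linext h (linext (fun p => << g p >>) z) = linext (h \o g) z.
Proof.
by rewrite [linext _ z]linextE linext_sum linextE; apply: eq_bigr => p _; rewrite linextZ linextU1.
Qed.

Lemma ptree_ind_in (P : ptree -> Prop) :
  (forall ts, {in ts, forall t, P t} -> P (Node ts)) -> forall t, P t.
Proof.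
move=> IHnode; fix IH 1; case=> ts; apply: IHnode.
have : foldr (fun t acc => P t /\ acc) True ts.
  by elim: ts => [|t ts IHts] /=; [|split; [exact: IH | exact: IHts]].
by elim: ts => //= t ts IHts [Pt Pts] s; rewrite inE => /predU1P [-> | /(IHts Pts)].
Qed.

Lemma ptree_left_ind (P : ptree -> Prop) :
  P (Node [::]) -> (forall t1 ts, P t1 -> P (Node (t1 :: ts))) -> forall t, P t.
Proof. by move=> Pleaf Pnode; fix IH 1; case=> [[|t1 ts]]; [exact: Pleaf | exact: Pnode (IH t1)]. Qed.

Fixpoint tsize (t : ptree) : nat := let: Node ts := t in (sumn (map tsize ts)).+1.
Definition fsize (u : forest) : nat := sumn (map tsize u).

Lemma forest1 : (mone : forest) = FMonom [::].
Proof. exact: fmoneE. Qed.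

Lemma fsize1 : fsize mone = 0.
Proof. by rewrite forest1. Qed.

Lemma fsizeM u v : fsize (mmul u v) = (fsize u + fsize v)%N.
Proof. by rewrite /fsize fmM map_cat sumn_cat. Qed.

Lemma fsize_Bplus u : fsize (Bplus_forest u) = (fsize u).+1.
Proof. by rewrite /fsize /= addn0. Qed.

Lemma fsize_gt0 (u : forest) : u != mone -> (0 < fsize u)%N.
Proof. by case: u => [[|[ts] s]]; rewrite ?forest1. Qed.

Lemma mmul_fpair (p q : fpair) : mmul p q = (mmul p.1 q.1, mmul p.2 q.2).
Proof. by []. Qed.

Lemma forest_cat s1 s2 : mmul (FMonom s1 : forest) (FMonom s2) = FMonom (s1 ++ s2).
Proof. exact: fmmulE. Qed.

Lemma forest_neq1 t s : FMonom (t :: s) != mone :> forest.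
Proof. by rewrite forest1. Qed.

Lemma Bplus_neq1 u : Bplus_forest u != mone.
Proof. exact: forest_neq1. Qed.

Fixpoint bitseqs (n : nat) : seq (seq bool) :=
  if n is n'.+1 then [seq true :: b | b <- bitseqs n'] ++ [seq false :: b | b <- bitseqs n']
  else [:: [::]].

Lemma mem_bitseqs n bs : (bs \in bitseqs n) = (size bs == n).
Proof.
have mem_cons b b' bs' B : (b :: bs' \in [seq b' :: c | c <- B]) = (b == b') && (bs' \in B).
  by apply/mapP/andP => [[c c_in [-> ->]] | [/eqP -> bs'_in]]; [rewrite eqxx | exists bs'].
elim: n bs => [|n IH] [|b bs] //=; rewrite mem_cat.
  by apply/negbTE/norP; split; apply/mapP => -[].
by rewrite !mem_cons eqSS -IH; case: b; rewrite ?orbF.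
Qed.

Lemma uniq_bitseqs n : uniq (bitseqs n).
Proof.
elim: n => //= n IH; rewrite cat_uniq !map_inj_uniq ?IH //=; try by move=> ? ? [].
by rewrite andbT; apply/hasPn => _ /mapP [bs _ ->]; apply/mapP => -[].
Qed.

Lemma big_set_bitseqs n (V : zmodType) (F : seq bool -> V) :
  \sum_(c : {set 'I_n}) F [seq i \in c | i <- enum 'I_n] = \sum_(bs <- bitseqs n) F bs.
Proof.
pose bits (c : {set 'I_n}) := [seq i \in c | i <- enum 'I_n].
have nth_bits c (i : 'I_n) : nth false (bits c) i = (i \in c).
  by rewrite (nth_map i) ?size_enum_ord // nth_ord_enum.
have bits_inj : injective bits.
  by move=> c1 c2 eq_bits; apply/setP => i; rewrite -!nth_bits eq_bits.
rewrite -(big_map bits predT F); apply/perm_big/uniq_perm.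
- by rewrite map_inj_uniq ?index_enum_uniq.
- exact: uniq_bitseqs.
move=> bs; rewrite mem_bitseqs; apply/mapP/eqP => [[c _ ->]|size_bs].
  by rewrite size_map size_enum_ord.
exists [set i : 'I_n | nth false bs i]; first exact: mem_index_enum.
apply: (@eq_from_nth _ false); first by rewrite size_map size_enum_ord size_bs.
move=> i; rewrite size_bs => lt_i_n.
by rewrite (nth_map (Ordinal lt_i_n)) ?size_enum_ord // inE (nth_enum_ord _ lt_i_n).
Qed.

Lemma card_count_bits n (c : {set 'I_n}) : #|c| = count id [seq i \in c | i <- enum 'I_n].
Proof. by rewrite count_map -size_filter enumT cardE. Qed.

Section Antipode.
Variable K : fieldType.

Local Notation e u := (<< u >> : H K).
Local Notation tree r := (e (FMonom [:: r])).
Local Notation "u ⊗ v" := (<< ((u : forest), (v : forest)) : fpair >> : H2 K) (at level 30).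

(* [cutL t bs] is the pair (component of the root, other components); X is
   applied to the component of the root, which W^c(t) places last. *)
Definition left_cut_sum (t : ptree) (X : ptree -> H K) : H K :=
  \sum_(bs <- bitseqs (ldepth t))
    (-1) ^+ count id bs *: (e (FMonom (cutL t bs).2) * X (cutL t bs).1).

Lemma eq_left_cut_sum t X1 X2 : X1 =1 X2 -> left_cut_sum t X1 = left_cut_sum t X2.
Proof. by move=> eq_X; apply: eq_bigr => bs _; rewrite eq_X. Qed.

Lemma left_cut_sum_leaf X : left_cut_sum (Node [::]) X = X (Node [::]).
Proof. by rewrite /left_cut_sum /= big_seq1 expr0 scale1r -forest1 -malg1U mul1r. Qed.

Lemma left_cut_sum_node t1 ts X :
  left_cut_sum (Node (t1 :: ts)) X =
    - (left_cut_sum t1 (fun r => tree r) * X (Node ts))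
    + left_cut_sum t1 (fun r => X (Node (r :: ts))).
Proof.
rewrite {1}/left_cut_sum /= big_cat !big_map; apply: congr2.
  rewrite /left_cut_sum mulr_suml -sumrN; apply: eq_bigr => bs _; case: cutL => r ds /=.
  by rewrite exprS mulN1r scaleNr -scalerAl malgMUU forest_cat.
by apply: eq_bigr => bs _; case: cutL.
Qed.

Variable Delta : H K -> H2 K.
Hypothesis Delta_coproduct : is_coproduct Delta.

Lemma tensUU u v : tens (e u) (e v) = u ⊗ v.
Proof. by rewrite /tens !msuppU1 !big_seq_fset1 !mcoeffUU mulr1 scale1r. Qed.

Lemma BplusU u : Bplus (e u) = e (Bplus_forest u).
Proof. by rewrite /Bplus msuppU1 big_seq_fset1 mcoeffUU scale1r. Qed.

Lemma Delta1 : Delta (e mone) = mone ⊗ mone.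
Proof. by case: Delta_coproduct => D1 _ _; rewrite -malg1U D1 malg1U tensUU. Qed.

Lemma DeltaM u v :
  Delta (e (mmul u v)) = u ⊗ mone * Delta (e v) + Delta (e u) * mone ⊗ v - u ⊗ v.
Proof. by case: Delta_coproduct => _ DM _; rewrite -malgMUU DM malg1U !tensUU. Qed.

Lemma Delta_Bplus u : Delta (e (Bplus_forest u)) =
  Bplus_forest u ⊗ mone + linext (fun p : fpair => p.1 ⊗ Bplus_forest p.2) (Delta (e u)).
Proof.
case: Delta_coproduct => _ _ DB; rewrite -BplusU DB BplusU malg1U tensUU.
by congr (_ + _); rewrite /IdxBplus linextE; apply: eq_bigr => p _; rewrite BplusU tensUU.
Qed.

Lemma linext_Delta1 (h : fpair -> H K) : linext h (Delta (e mone)) = h (mone, mone).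
Proof. by rewrite Delta1 linextU1. Qed.

Lemma linext_DeltaM (h : fpair -> H K) u v :
  linext h (Delta (e (mmul u v))) =
    linext (fun p : fpair => h (mmul u p.1, p.2)) (Delta (e v))
    + linext (fun p : fpair => h (p.1, mmul p.2 v)) (Delta (e u)) - h (u, v).
Proof.
(* Rewriting in a goal holding several basis elements << _ >> makes
   unification unfold their finite-support representation, hence the
   congruence steps here and the localized rewrites below. *)
rewrite DeltaM linextB linextD.
apply: congr2; [apply: congr2 | apply: congr1; exact: linextU1].
by rewrite linextMl; apply: eq_linext => p; rewrite mmul_fpair mul1m.
by rewrite linextMr; apply: eq_linext => p; rewrite mmul_fpair mulm1.
Qed.

Lemma linext_Delta_Bplus (h : fpair -> H K) u :
  linext h (Delta (e (Bplus_forest u))) =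
    h (Bplus_forest u, mone) + linext (fun p : fpair => h (p.1, Bplus_forest p.2)) (Delta (e u)).
Proof. by rewrite Delta_Bplus linextD linextU1 linext_comp. Qed.

Definition coproduct_shape (u : forest) : Prop :=
  exists2 R : seq fpair,
    Delta (e u) = u ⊗ mone + mone ⊗ u + \sum_(p <- R) << p >>
    & all (fun p : fpair => [&& p.1 != mone, p.2 != mone & fsize p.2 < fsize u]%N) R.

Lemma coproduct_shapeM u v : u != mone -> v != mone ->
  coproduct_shape u -> coproduct_shape v -> coproduct_shape (mmul u v).
Proof.
move=> u_neq1 v_neq1 [Ru DeltaU Ru_small] [Rv DeltaV Rv_small].
exists ((u, v) :: [seq (mmul u p.1, p.2) | p <- Rv] ++ [seq (p.1, mmul p.2 v) | p <- Ru]).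
  have DeltaV_left : u ⊗ mone * Delta (e v) =
      mmul u v ⊗ mone + u ⊗ v + \sum_(p <- Rv) << (mmul u p.1, p.2) >>.
    rewrite DeltaV !mulrDr mulr_sumr !malgMUU !mmul_fpair /= !mulm1 mul1m.
    by congr (_ + _); apply: eq_bigr => p _; rewrite malgMUU mmul_fpair /= mul1m.
  have DeltaU_right : Delta (e u) * mone ⊗ v =
      u ⊗ v + mone ⊗ mmul u v + \sum_(p <- Ru) << (p.1, mmul p.2 v) >>.
    rewrite DeltaU !mulrDl mulr_suml !malgMUU !mmul_fpair /= !mulm1 mul1m.
    by congr (_ + _); apply: eq_bigr => p _; rewrite malgMUU mmul_fpair /= mulm1.
  rewrite DeltaM DeltaV_left DeltaU_right big_cons big_cat !big_map.
  by rewrite [LHS](AC ((3*3)*1) ((2*7)*((1*5)*(4*(3*6))))) /= subrr add0r.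
rewrite /= all_cat !all_map u_neq1 v_neq1 fsizeM -{1}[fsize v]add0n ltn_add2r fsize_gt0 //=.
apply/andP; split.
  apply/allP => -[p1 p2] /(allP Rv_small) /= /and3P [p1_neq1 -> small].
  by rewrite mmul_neq1l // (leq_trans small) // leq_addl.
apply/allP => -[p1 p2] /(allP Ru_small) /= /and3P [-> p2_neq1 small].
by rewrite mmul_neq1l //= fsizeM ltn_add2r.
Qed.

Lemma coproduct_shape_Bplus u :
  (u != mone -> coproduct_shape u) -> coproduct_shape (Bplus_forest u).
Proof.
move=> shape_u; have [->|u_neq1] := eqVneq u mone.
  by exists [::]; rewrite // Delta_Bplus Delta1 linextU1 big_nil addr0.
have [R DeltaU R_small] := shape_u u_neq1.
exists ((u, Bplus_forest mone) :: [seq (p.1, Bplus_forest p.2) | p <- R]).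
  rewrite Delta_Bplus DeltaU !linextD !linextU1 linext_sum big_cons big_map.
  under [X in _ + (_ + _ + X)]eq_bigr do rewrite linextU1.
  by rewrite /= [LHS](AC (1*3) ((1*3)*(2*4))).
rewrite /= all_map u_neq1 !Bplus_neq1 !fsize_Bplus ltnS fsize1 fsize_gt0 //=.
apply/allP => -[p1 p2] /(allP R_small) /and3P [p1_neq1 _ small].
by rewrite /= p1_neq1 Bplus_neq1 fsize_Bplus ltnS.
Qed.

Lemma coproduct_shape_trees ts :
  {in ts, forall t, coproduct_shape (FMonom [:: t])} ->
  FMonom ts != mone -> coproduct_shape (FMonom ts).
Proof.
elim: ts => [|t [|t' ts] IH] trees_shape; first by rewrite forest1 eqxx.
  by move=> _; apply: trees_shape; rewrite mem_head.
move=> _; rewrite -[t :: _]cat1s -forest_cat; apply: coproduct_shapeM; rewrite ?forest_neq1 //.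
  by apply: trees_shape; rewrite mem_head.
by apply: IH (forest_neq1 _ _) => s s_in; apply: trees_shape; rewrite inE s_in orbT.
Qed.

Lemma coproduct_shape_tree t : coproduct_shape (FMonom [:: t]).
Proof.
elim/ptree_ind_in: t => ts IHts.
exact: (coproduct_shape_Bplus (u := FMonom ts)) (coproduct_shape_trees IHts).
Qed.

Lemma coproduct_shape_forest u : u != mone -> coproduct_shape u.
Proof. by case: u => ts; apply: coproduct_shape_trees => t _; apply: coproduct_shape_tree. Qed.

Variable S : H K -> H K.
Hypothesis S_conv_id : forall x : H K, conv Delta S id x = unit_eps x.
Hypothesis id_conv_S : forall x : H K, conv Delta id S x = unit_eps x.

Definition Sconv (X : forest -> H K) : H2 K -> H K :=
  linext (fun p : fpair => S (e p.1) * X p.2).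

Lemma convE (f g : H K -> H K) x :
  conv Delta f g x = linext (fun p : fpair => f (e p.1) * g (e p.2)) (Delta x).
Proof. by rewrite linextE. Qed.

Lemma unit_epsU u : unit_eps (e u) = (u == mone)%:R *: 1.
Proof. by rewrite /unit_eps /eps mcoeffU1. Qed.

Lemma unit_epsU_neq1 u : u != mone -> unit_eps (e u) = 0.
Proof. by move=> /negbTE u_neq1; rewrite unit_epsU u_neq1 scale0r. Qed.

Lemma antipode1 : S (e mone) = 1.
Proof.
have := S_conv_id (e mone).
by rewrite convE linext_Delta1 unit_epsU eqxx scale1r -malg1U mulr1.
Qed.

Lemma antipodeM_eq0 u v : u != mone -> v != mone -> S (e (mmul u v)) = 0.
Proof.
elim: (fsize u).+1 {-2}u (ltnSn (fsize u)) v => // n IH {}u u_small v u_neq1 v_neq1.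
have := id_conv_S (e (mmul u v)).
rewrite convE linext_DeltaM unit_epsU_neq1 ?mmul_neq1l //.
rewrite [A in A + _ - _](_ : _ = e u * conv Delta id S (e v)); last first.
  by rewrite convE -linext_mull; apply: eq_linext => p; rewrite /= mulrA malgMUU.
rewrite id_conv_S unit_epsU_neq1 // mulr0 add0r.
have [R DeltaU R_small] := coproduct_shape_forest u_neq1.
rewrite DeltaU !linextD !linextU1 linext_sum /= big1_seq ?addr0; last first.
  move=> p /(allP R_small) /and3P [_ p2_neq1 p2_small].
  by rewrite linextU1 /= IH ?mulr0 // (leq_trans p2_small).
by rewrite mul1m -malg1U mul1r addrAC subrr add0r.
Qed.

Lemma SconvMr u y X : u != mone ->
  Sconv X (Delta (e (mmul u y))) = Sconv (fun v => X (mmul v y)) (Delta (e u)).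
Proof.
move=> u_neq1; have [->|y_neq1] := eqVneq y mone.
  by rewrite mulm1; apply: eq_linext => p; rewrite /= mulm1.
rewrite /Sconv [LHS]linext_DeltaM /=.
rewrite [A in A + _ - _ = _](_ : _ = S (e u) * X y); last first.
  have [R DeltaY R_small] := coproduct_shape_forest y_neq1.
  rewrite DeltaY !linextD !linextU1 linext_sum /= big1_seq ?addr0; last first.
    move=> p /(allP R_small) /and3P [p1_neq1 _ _].
    by rewrite linextU1 /= antipodeM_eq0 ?mul0r.
  by rewrite mulm1 antipodeM_eq0 // mul0r add0r.
by rewrite addrAC subrr add0r.
Qed.

Lemma Sconv_id_eq0 u : u != mone -> Sconv (fun v => e v) (Delta (e u)) = 0.
Proof. by move=> u_neq1; rewrite -(unit_epsU_neq1 u_neq1) -S_conv_id convE. Qed.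

Definition Sconv_tree_spec t : Prop := forall X,
  Sconv X (Delta (tree t)) = S (tree t) * X mone + left_cut_sum t (fun r => X (FMonom [:: r])).

Lemma antipode_tree_of_Sconv t :
  Sconv_tree_spec t -> S (tree t) = - left_cut_sum t (fun r => tree r).
Proof.
move=> /(_ (fun v => e v)); rewrite Sconv_id_eq0 ?forest_neq1 // -malg1U mulr1.
by move=> /eqP; rewrite eq_sym addr_eq0 => /eqP.
Qed.

Lemma Sconv_tree t : Sconv_tree_spec t.
Proof.
elim/ptree_left_ind: t => [|t1 ts IH] X.
  have leaf : FMonom [:: Node [::]] = Bplus_forest mone by rewrite forest1.
  rewrite leaf [LHS]linext_Delta_Bplus /= linext_Delta1 antipode1 mul1r.
  by rewrite left_cut_sum_leaf -leaf.
have node : FMonom [:: Node (t1 :: ts)] = Bplus_forest (mmul (FMonom [:: t1]) (FMonom ts)).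
  by rewrite forest_cat.
rewrite node [LHS]linext_Delta_Bplus /= -node.
rewrite -/(Sconv (fun v => X (Bplus_forest v)) _) SconvMr ?forest_neq1 // IH.
rewrite left_cut_sum_node [A in _ + (A * _ + _) = _](antipode_tree_of_Sconv IH) mulNr mul1m.
rewrite (@eq_left_cut_sum t1
  (fun r => X (Bplus_forest (mmul (FMonom [:: r] : forest) (FMonom ts))))
  (fun r => X (FMonom [:: Node (r :: ts)]))) // => r.
by rewrite forest_cat.
Qed.

Lemma antipode_tree t : S (tree t) = - left_cut_sum t (fun r => tree r).
Proof. exact/antipode_tree_of_Sconv/Sconv_tree. Qed.

End Antipode.

Theorem proposition15 (K : fieldType)
    (Delta : {linear H K -> H2 K}) (S : {linear H K -> H K}) :
  is_coproduct Delta ->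
  (forall x : H K, conv Delta S id x = unit_eps x) ->
  (forall x : H K, conv Delta id S x = unit_eps x) ->
  forall t : ptree,
    S (<< FMonom [:: t] >> : H K) =
      - \sum_(c : {set 'I_(ldepth t)})
          ((-1) ^+ #|c| : K) *: (<< FMonom (Wc c) >> : H K).
Proof.
move=> Delta_coproduct S_conv_id id_conv_S t.
rewrite (antipode_tree Delta_coproduct S_conv_id id_conv_S) /left_cut_sum.
rewrite -big_set_bitseqs; congr (- _); apply: eq_bigr => c _.
rewrite /Wc /cut_bits card_count_bits; case: cutL => r ds /=.
by rewrite malgMUU forest_cat.
Qed.
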